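(* Let $R$ be a ring and let $\sigma: P_{-1}\to P_0$ be a homomorphism between projective right $R$-modules. Let $\sigma': P_{-1}\to \operatorname{im}\sigma$ be the map obtained from $\sigma$ by restricting its codomain to its image. Then $$\mathcal{D}_\sigma=(\operatorname{Coker}\sigma)^\perp\cap\mathcal{D}_{\sigma'}.$$
   Context: For a homomorphism $\alpha: A\to B$ of right $R$-modules, $\mathcal{D}_\alpha=\{X\in\text{Mod-}R \mid \operatorname{Hom}_R(\alpha,X):\operatorname{Hom}_R(B,X)\to\operatorname{Hom}_R(A,X)\text{ is surjective}\}$. For a module $C$, $C^\perp=\{M\in\text{Mod-}R\mid \operatorname{Ext}^1_R(C,M)=0\}$. *)

(* Right R-modules are modelled as left modules over the
   converse ring R^c, i.e. objects of type [lmodType R^c]; homomorphisms of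
   right R-modules are [{linear M -> N}] between such modules. *)
From HB Require Import structures.
From mathcomp Require Import all_boot all_algebra.
Set Implicit Arguments. Unset Strict Implicit. Unset Printing Implicit Defensive.
Import GRing.Theory.
Local Open Scope ring_scope.

Notation rmodType R := (lmodType (R^c)%type).

Definition projective (R : pzRingType) (P : rmodType R) : Prop :=
  forall (M N : rmodType R) (g : {linear M -> N}) (f : {linear P -> N}),
    (forall n, exists m, g m = n) ->
    exists h : {linear P -> M}, forall x, g (h x) = f x.

Definition D_class (R : pzRingType) (A B : rmodType R) (alpha : {linear A -> B})
  (X : rmodType R) : Prop :=
  forall f : {linear A -> X}, exists g : {linear B -> X}, forall a, g (alpha a) = f a.

Definition short_exact (R : pzRingType) (M E C : rmodType R)
  (i : {linear M -> E}) (p : {linear E -> C}) : Prop :=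
  injective i /\ (forall c, exists e, p e = c) /\
  (forall e, p e = 0 <-> exists m, i m = e).

(* Ext^1_R(C, M) = 0, via Yoneda Ext^1: every extension of C by M splits. *)
Definition Ext1_zero (R : pzRingType) (C M : rmodType R) : Prop :=
  forall (E : rmodType R) (i : {linear M -> E}) (p : {linear E -> C}),
    short_exact i p -> exists s : {linear C -> E}, forall c, p (s c) = c.

Definition in_perp (R : pzRingType) (C M : rmodType R) : Prop := Ext1_zero C M.

(* For [X] in [D_sigma], lift [pi] along an extension [0 -> X -> E -> C -> 0]
   through the projective [P0]; on [im sigma] the lift lands in [X], and
   extending that restriction to [P0] and subtracting it leaves a map killing
   [im sigma = Ker pi], i.e. a splitting.  Conversely, every map
   [im sigma -> X] extends to [P0] once [Ext^1(C, X) = 0]: the pushout of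
   [0 -> im sigma -> P0 -> C -> 0] along it splits, and a retraction of the
   split pushout provides the extension.  Composing with [sigma'] gives
   [D_sigma' ∩ C^perp ⊆ D_sigma]. *)
From HB Require Import structures.
From mathcomp Require Import all_boot all_algebra generic_quotient ring_quotient.
From mathcomp Require Import boolp.
Set Implicit Arguments. Unset Strict Implicit. Unset Printing Implicit Defensive.
Import GRing.Theory.
Local Open Scope ring_scope.
Local Open Scope quotient_scope.

Definition to_linear (S : pzRingType) (U V : lmodType S) (f : U -> V)
  (f_lin : linear f) := f.
HB.instance Definition _ (S : pzRingType) (U V : lmodType S) (f : U -> V)
  (f_lin : linear f) := GRing.isLinear.Build S U V *:%R (to_linear f_lin) f_lin.

Section Cokernel.
Variables (S : pzRingType) (U V : lmodType S) (phi : {linear U -> V}).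

Definition image_pred : pred V := fun v => `[< exists u, phi u = v >].

Lemma image_predP v : reflect (exists u, phi u = v) (v \in image_pred).
Proof. exact: asboolP. Qed.

Lemma image_pred_zmod_closed : zmod_closed image_pred.
Proof.
split; first by apply/image_predP; exists 0; rewrite linear0.
move=> _ _ /image_predP[u <-] /image_predP[w <-].
by apply/image_predP; exists (u - w); rewrite linearB.
Qed.
HB.instance Definition _ :=
  GRing.isZmodClosed.Build _ image_pred image_pred_zmod_closed.

Definition coker := Quotient.quot (GRing.ZmodClosed.clone V image_pred _).
HB.instance Definition _ := GRing.Zmodule.on coker.
HB.instance Definition _ := EqQuotient.on coker.

Definition coker_pi (v : V) : coker := \pi_coker v.

Lemma coker_pi_eqP x y : reflect (coker_pi x = coker_pi y) (x - y \in image_pred).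
Proof. by rewrite Quotient.idealrBE; apply: eqP. Qed.

Lemma coker_piD x y : coker_pi (x + y) = coker_pi x + coker_pi y.
Proof. by rewrite /coker_pi !piE. Qed.

Lemma coker_pi_surj (q : coker) : exists v, coker_pi v = q.
Proof. by exists (repr q); rewrite /coker_pi reprK. Qed.

Definition coker_scale (a : S) (q : coker) : coker := coker_pi (a *: repr q).

Lemma coker_scale_pi a v : coker_scale a (coker_pi v) = coker_pi (a *: v).
Proof.
apply/coker_pi_eqP; rewrite -scalerBr.
have /coker_pi_eqP/image_predP[u <-] : coker_pi (repr (coker_pi v)) = coker_pi v.
  by rewrite /coker_pi reprK.
by apply/image_predP; exists (a *: u); rewrite linearZ.
Qed.

Lemma coker_scaleA a b q :
  coker_scale a (coker_scale b q) = coker_scale (a * b) q.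
Proof. by have [v <-] := coker_pi_surj q; rewrite !coker_scale_pi scalerA. Qed.

Lemma coker_scale1 : left_id 1 coker_scale.
Proof. by move=> q; have [v <-] := coker_pi_surj q; rewrite coker_scale_pi scale1r. Qed.

Lemma coker_scaleDr : right_distributive coker_scale +%R.
Proof.
move=> a q r; have [v <-] := coker_pi_surj q; have [w <-] := coker_pi_surj r.
by rewrite -coker_piD !coker_scale_pi scalerDr coker_piD.
Qed.

Lemma coker_scaleDl q : {morph coker_scale^~ q : a b / a + b}.
Proof.
move=> a b; have [v <-] := coker_pi_surj q.
by rewrite !coker_scale_pi scalerDl coker_piD.
Qed.

HB.instance Definition _ := GRing.Zmodule_isLmodule.Build S coker
  coker_scaleA coker_scale1 coker_scaleDr coker_scaleDl.

Lemma coker_pi_linear : linear coker_pi.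
Proof. by move=> a x y; rewrite coker_piD -coker_scale_pi. Qed.
HB.instance Definition _ :=
  GRing.isLinear.Build S V coker *:%R coker_pi coker_pi_linear.

Lemma coker_pi_eq0 v : coker_pi v = 0 <-> exists u, phi u = v.
Proof.
rewrite -(linear0 coker_pi); split.
  by move/coker_pi_eqP; rewrite subr0 => /image_predP.
by move=> ex; apply/coker_pi_eqP; rewrite subr0; apply/image_predP.
Qed.

End Cokernel.

Section Factorization.
Variables (S : pzRingType) (A M E : lmodType S).

Lemma linear_factor_inj (i : {linear M -> E}) (f : {linear A -> E}) :
  injective i -> (forall a, exists m, i m = f a) ->
  exists g : {linear A -> M}, forall a, i (g a) = f a.
Proof.
move=> i_inj f_im; pose g a := sval (cid (f_im a)).
have gK a : i (g a) = f a := svalP (cid (f_im a)).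
have g_lin : linear g by move=> c a b; apply: i_inj; rewrite linearP !gK linearP.
by exists (to_linear g_lin).
Qed.

Lemma linear_factor_surj (p : {linear A -> M}) (h : {linear A -> E}) :
  (forall m, exists a, p a = m) -> (forall a, p a = 0 -> h a = 0) ->
  exists s : {linear M -> E}, forall a, s (p a) = h a.
Proof.
move=> p_surj h_ker.
have h_fiber a b : p a = p b -> h a = h b.
  by move=> pab; apply/eqP; rewrite -subr_eq0 -linearB h_ker // linearB pab subrr.
pose s m := h (sval (cid (p_surj m))).
have sK a : s (p a) = h a by apply: h_fiber; exact: svalP (cid (p_surj (p a))).
have s_lin : linear s.
  move=> c m n; have [a <-] := p_surj m; have [b <-] := p_surj n.
  by rewrite -linearP !sK linearP.
by exists (to_linear s_lin).
Qed.

End Factorization.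

Lemma short_exact_retraction (R : pzRingType) (M E A : rmodType R)
    (i : {linear M -> E}) (p : {linear E -> A})
    (s : {linear A -> E}) :
  short_exact i p -> (forall a, p (s a) = a) ->
  exists r : {linear E -> M}, forall m, r (i m) = m.
Proof.
move=> [i_inj [_ exact_ip]] sK.
have [r rK] : exists r : {linear E -> M}, forall e, i (r e) = e - s (p e).
  apply: (linear_factor_inj (f := idfun \- (s \o p))) => // e.
  by apply/exact_ip; rewrite /= linearB sK subrr.
exists r => m; apply: i_inj; rewrite rK.
have /exact_ip -> : exists m', i m' = i m by exists m.
by rewrite linear0 subr0.
Qed.

Lemma D_class_comp (R : pzRingType) (A B C X : rmodType R)
    (alpha : {linear A -> B}) (beta : {linear B -> C}) (gamma : {linear A -> C}) :
  (forall a, beta (alpha a) = gamma a) ->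
  D_class alpha X -> D_class beta X -> D_class gamma X.
Proof.
move=> fact Dalpha Dbeta f; have [g gK] := Dalpha f; have [h hK] := Dbeta g.
by exists h => a; rewrite -fact hK gK.
Qed.

Lemma D_class_factor (R : pzRingType) (A B C X : rmodType R)
    (alpha : {linear A -> B}) (beta : {linear B -> C}) (gamma : {linear A -> C}) :
  (forall a, beta (alpha a) = gamma a) -> D_class gamma X -> D_class alpha X.
Proof.
move=> fact Dgamma f; have [g gK] := Dgamma f.
by exists (g \o beta) => a /=; rewrite fact gK.
Qed.

Section Pushout.
Variables (R : pzRingType) (I P C X : rmodType R).
Variables (iota : {linear I -> P}) (pi : {linear P -> C}) (f : {linear I -> X}).
Hypothesis exact_iota_pi : short_exact iota pi.

Definition pushout_rel (z : I) : (X * P)%type := (f z, - iota z).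

Lemma pushout_rel_linear : linear pushout_rel.
Proof. by move=> a y z; rewrite /pushout_rel !linearP. Qed.

Definition pushout := coker (to_linear pushout_rel_linear).

Lemma pushout_inl_linear : linear (fun x : X => coker_pi _ (x, 0) : pushout).
Proof.
move=> a x x'; rewrite -linearP; congr coker_pi.
by apply: injective_projections; rewrite /= ?scaler0 ?addr0.
Qed.

Lemma pushout_inr_linear : linear (fun y : P => coker_pi _ (0, y) : pushout).
Proof.
move=> a y y'; rewrite -linearP; congr coker_pi.
by apply: injective_projections; rewrite /= ?scaler0 ?addr0.
Qed.

Definition pushout_inl : {linear X -> pushout} := to_linear pushout_inl_linear.
Definition pushout_inr : {linear P -> pushout} := to_linear pushout_inr_linear.

Lemma pushout_commutes z : pushout_inl (f z) = pushout_inr (iota z).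
Proof.
apply/coker_pi_eqP/image_predP; exists z.
by apply: injective_projections; rewrite /= ?subr0 ?sub0r.
Qed.

Lemma pushout_inl_inj : injective pushout_inl.
Proof.
have [iota_inj _] := exact_iota_pi.
move=> x x' /coker_pi_eqP/image_predP[z [fz iz]].
have /iota_inj z0 : iota z = iota 0 by rewrite linear0 -[iota z]opprK iz subr0 oppr0.
by apply/eqP; rewrite -subr_eq0 -fz z0 linear0.
Qed.

Lemma pushout_short_exact :
  exists p : {linear pushout -> C}, short_exact pushout_inl p.
Proof.
have [_ [pi_surj exact_iota]] := exact_iota_pi.
have [p pK] : exists p : {linear pushout -> C}, forall v, p (coker_pi _ v) = pi v.2.
  apply: (linear_factor_surj (h := pi \o snd)); first exact: coker_pi_surj.
  move=> _ /coker_pi_eq0[z <-] /=; rewrite /to_linear /pushout_rel /= linearN.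
  by rewrite (proj2 (exact_iota _)) ?oppr0 //; exists z.
exists p; split; [exact: pushout_inl_inj | split].
- by move=> c; have [y <-] := pi_surj c; exists (pushout_inr y); rewrite pK.
- move=> e; have [[x y] <-] := coker_pi_surj e.
  rewrite pK /=; split=> [/exact_iota[z <-] | [x' ex']].
    exists (x + f z); apply/coker_pi_eqP/image_predP; exists z.
    by apply: injective_projections; rewrite /= ?sub0r // addrC addKr.
  by move/(congr1 p): ex'; rewrite !pK linear0.
Qed.
End Pushout.

Lemma D_class_of_Ext1_zero (R : pzRingType) (I P C X : rmodType R)
    (iota : {linear I -> P}) (pi : {linear P -> C}) :
  short_exact iota pi -> Ext1_zero C X -> D_class iota X.
Proof.
move=> exact_iota_pi ext f.
have [p exact_p] := pushout_short_exact f exact_iota_pi.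
have [s sK] := ext _ _ _ exact_p.
have [r rK] := short_exact_retraction exact_p sK.
by exists (r \o pushout_inr iota f) => z; rewrite -[RHS]rK pushout_commutes.
Qed.

Lemma Ext1_zero_of_D_class (R : pzRingType) (Q P C X : rmodType R)
    (sigma : {linear Q -> P}) (pi : {linear P -> C}) :
  projective P -> (forall c, exists y, pi y = c) ->
  (forall y, pi y = 0 <-> exists x, sigma x = y) ->
  D_class sigma X -> Ext1_zero C X.
Proof.
move=> projP pi_surj exact_sigma Dsigma E i p [i_inj [p_surj exact_ip]].
have [h hK] := projP _ _ p pi p_surj.
have [f fK] : exists f : {linear Q -> X}, forall a, i (f a) = h (sigma a).
  apply: (linear_factor_inj (f := h \o sigma)) => // a.
  by apply/exact_ip; rewrite /= hK; apply/exact_sigma; exists a.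
have [g gK] := Dsigma f.
have [s sK] : exists s : {linear C -> E}, forall y, s (pi y) = h y - i (g y).
  apply: (linear_factor_surj (h := h \- (i \o g))) => // y /exact_sigma[a <-].
  by rewrite /= gK fK subrr.
exists s => c; have [y <-] := pi_surj c.
by rewrite sK linearB hK (proj2 (exact_ip _)) ?subr0 //; exists (g y).
Qed.

Theorem lemma2p1 (R : pzRingType) (Pm1 P0 : rmodType R)
  (projPm1 : projective Pm1) (projP0 : projective P0)
  (sigma : {linear Pm1 -> P0})
  (I : rmodType R) (iota : {linear I -> P0}) (sigma' : {linear Pm1 -> I})
  (iota_inj : injective iota)
  (sigma'_surj : forall y : I, exists x, sigma' x = y)
  (sigma_fact : forall x, iota (sigma' x) = sigma x)
  (C : rmodType R) (pi : {linear P0 -> C})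
  (pi_surj : forall c : C, exists y, pi y = c)
  (pi_ker : forall y, pi y = 0 <-> exists x, sigma x = y) :
  forall X : rmodType R,
    D_class sigma X <-> (in_perp C X /\ D_class sigma' X).
Proof.
move=> X.
have exact_iota_pi : short_exact iota pi.
  do 2!split=> //; move=> y; rewrite pi_ker; split=> [[x <-] | [z <-]].
    by exists (sigma' x).
  by have [x <-] := sigma'_surj z; exists x.
split=> [Dsigma | [perpX Dsigma']].
  split; first exact: Ext1_zero_of_D_class projP0 pi_surj pi_ker Dsigma.
  exact: D_class_factor sigma_fact Dsigma.
exact: D_class_comp sigma_fact Dsigma' (D_class_of_Ext1_zero exact_iota_pi perpX).
Qed.
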